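(* Let $C$ be a linear subspace of $\mathbb{F}_q^\nu$ endowed with the Hamming metric, with coset leader weight distribution $(\alpha_0,\alpha_1,\dots,\alpha_\nu)$. Then there exist a finite-dimensional vector space $V$ over $\mathbb{F}_q$ and a projective weight $\operatorname{wt}_{\mathcal{F}}$ on $V$ such that $\alpha_i=|\{v\in V:\operatorname{wt}_{\mathcal{F}}(v)=i\}|$ for every $i=0,1,\dots,\nu$.
   Context: The coset leader weight of a coset $y+C$ is $\min\{\operatorname{wt}_H(x):x\in y+C\}$; $\alpha_i$ is the number of cosets of $C$ in $\mathbb{F}_q^\nu$ of coset leader weight $i$. A projective weight on $V$ is $\operatorname{wt}_{\mathcal{F}}(v)=\min(\{|I|:I\subseteq\mathcal{F},v\in\langle I\rangle\}\cup\{\infty\})$ for a set $\mathcal{F}\subset V$ of pairwise linearly independent nonzero vectors. *)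

From HB Require Import structures.
From mathcomp Require Import all_boot all_order all_algebra all_field.
Set Implicit Arguments. Unset Strict Implicit. Unset Printing Implicit Defensive.
Import GRing.Theory.
Local Open Scope ring_scope.

Definition hamming_wt (F : finFieldType) (nu : nat) (x : 'rV[F]_nu) : nat :=
  #|[set j : 'I_nu | x ord0 j != 0]|.

Definition cosets (F : finFieldType) (nu : nat) (C : {vspace 'rV[F]_nu})
  : {set {set 'rV[F]_nu}} :=
  [set [set y + c | c in C] | y : 'rV[F]_nu].

(* Coset leader weight: min of Hamming weights over the coset
   (the default nu is never reached for a nonempty coset, since wt <= nu). *)
Definition coset_leader_wt (F : finFieldType) (nu : nat)
  (K : {set 'rV[F]_nu}) : nat :=
  \big[minn/nu]_(x in K) hamming_wt x.

Definition alpha (F : finFieldType) (nu : nat) (C : {vspace 'rV[F]_nu}) (i : nat)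
  : nat :=
  #|[set K in cosets C | coset_leader_wt K == i]|.

Definition proj_family (F : finFieldType) (n : nat) (Fam : {set 'rV[F]_n}) : Prop :=
  (forall u, u \in Fam -> u != 0) /\
  (forall u v, u \in Fam -> v \in Fam -> u != v -> free [:: u; v]).

(* Projective weight wt_Fam(v) = min{|I| : I subset Fam, v in <I>},
   with None standing for infinity. The default #|Fam| of the min is
   harmless since every admissible I has #|I| <= #|Fam|. *)
Definition proj_wt (F : finFieldType) (n : nat) (Fam : {set 'rV[F]_n})
  (v : 'rV[F]_n) : option nat :=
  if [exists I : {set 'rV[F]_n}, (I \subset Fam) && (v \in <<enum I>>%VS)]
  then Some (\big[minn/#|Fam|]_(I : {set 'rV[F]_n} |
                (I \subset Fam) && (v \in <<enum I>>%VS)) #|I|)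
  else None.

From HB Require Import structures.
From mathcomp Require Import all_boot all_order all_algebra all_field.
Set Implicit Arguments. Unset Strict Implicit. Unset Printing Implicit Defensive.
Import Order.TTheory GRing.Theory.
Local Open Scope ring_scope.

(* Let phi be a linear map on F_q^nu with kernel C (a "syndrome" map, here
   x |-> x - proj_C x), and let Fam be the set of projective points spanned by
   the nonzero syndromes phi(e_j) of the unit vectors. Writing phi x as a
   combination of syndromes phi(e_j) over the support of x, and conversely
   lifting a combination of k members of Fam to a vector of weight <= k, shows
   wt_Fam(phi x) = coset leader weight of x + C. Since x + C |-> phi x is a
   bijection from the cosets onto the image of phi, which contains every
   vector of finite projective weight, the two weight distributions agree. *)

Lemma bigminn_le_cond (I : finType) (P : pred I) (G : I -> nat) d i :
  P i -> (\big[minn/d]_(j | P j) G j <= G i)%N.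
Proof. by rewrite -minEnat -leEnat; apply: bigmin_le_cond. Qed.

Lemma le_bigminn (I : finType) (P : pred I) (G : I -> nat) d m :
  (m <= d)%N -> (forall i, P i -> m <= G i)%N ->
  (m <= \big[minn/d]_(j | P j) G j)%N.
Proof. by rewrite -minEnat; apply: (@le_bigmin _ nat I (index_enum I) G d m P). Qed.

Section HammingWeight.
Variables (F : finFieldType) (n : nat).
Implicit Types (x y : 'rV[F]_n) (k : F).

Lemma hamming_wt0 : hamming_wt (0 : 'rV[F]_n) = 0%N.
Proof. by apply: eq_card0 => j; rewrite !inE mxE eqxx. Qed.

Lemma hamming_wtD x y : (hamming_wt (x + y) <= hamming_wt x + hamming_wt y)%N.
Proof.
apply: leq_trans (leq_card_setU _ _).1; apply/subset_leq_card/subsetP => j.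
by rewrite !inE mxE; case: (x 0 j =P 0) => [->|//]; rewrite add0r.
Qed.

Lemma hamming_wtZ k x : (hamming_wt (k *: x) <= hamming_wt x)%N.
Proof.
by apply/subset_leq_card/subsetP => j; rewrite !inE mxE mulf_eq0 negb_or => /andP[].
Qed.

Lemma hamming_wt_delta (j : 'I_n) : hamming_wt (delta_mx 0 j : 'rV[F]_n) = 1%N.
Proof.
rewrite /hamming_wt -[RHS](cards1 j); apply: eq_card => i.
by rewrite !inE mxE eqxx /=; case: (i == j); rewrite ?oner_eq0 ?eqxx.
Qed.

Lemma hamming_wt_max x : (hamming_wt x <= n)%N.
Proof. by rewrite -[leqRHS]card_ord max_card. Qed.

End HammingWeight.

Section ProjectiveNormalForm.
Variables (F : fieldType) (n : nat).
Implicit Types (u v : 'rV[F]_n) (c : F).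

Definition proj_normal u : 'rV[F]_n :=
  if [pick j | u 0 j != 0] is Some j then (u 0 j)^-1 *: u else u.

Lemma proj_normal_scale u : u != 0 -> exists2 s, s != 0 & proj_normal u = s *: u.
Proof.
move=> u_nz; rewrite /proj_normal; case: pickP => [j uj_nz|u0].
  by exists (u 0 j)^-1; rewrite ?invr_eq0.
by case/eqP: u_nz; apply/rowP => j; rewrite mxE; apply/eqP/negbFE/u0.
Qed.

Lemma proj_normalZ c u : c != 0 -> proj_normal (c *: u) = proj_normal u.
Proof.
move=> c_nz; rewrite /proj_normal.
have -> : [pick j | (c *: u) 0 j != 0] = [pick j | u 0 j != 0].
  by apply: eq_pick => j /=; rewrite mxE mulf_eq0 (negbTE c_nz).
case: pickP => [j _|u0]; first by rewrite mxE scalerA invfM mulrAC mulVf ?mul1r.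
have -> : u = 0 by apply/rowP => j; rewrite mxE; apply/eqP/negbFE/u0.
by rewrite scaler0.
Qed.

Lemma proj_normal_eq0 u : (proj_normal u == 0) = (u == 0).
Proof.
have [->|u_nz] := eqVneq u 0.
  by rewrite /proj_normal; case: pickP => [j _|_]; rewrite ?scaler0 eqxx.
have [s s_nz ->] := proj_normal_scale u_nz.
by rewrite scaler_eq0 (negbTE s_nz) (negbTE u_nz).
Qed.

Lemma proj_normal_id u : u != 0 -> proj_normal (proj_normal u) = proj_normal u.
Proof.
move=> u_nz; have [s s_nz def_u] := proj_normal_scale u_nz.
by rewrite {1}def_u proj_normalZ.
Qed.

End ProjectiveNormalForm.

Lemma proj_family_normal (F : finFieldType) n (S : {set 'rV[F]_n}) :
  0 \notin S -> proj_family [set proj_normal u | u in S].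
Proof.
move=> S_nz; set T := [set proj_normal u | u in S].
have nzT v : v \in T -> v != 0.
  by case/imsetP=> w wS ->; rewrite proj_normal_eq0; apply: contraNneq S_nz => <-.
have normal_id v : v \in T -> proj_normal v = v.
  by case/imsetP=> w wS ->; rewrite proj_normal_id // -proj_normal_eq0 nzT ?imset_f.
split=> // u v uS vS neq_uv.
rewrite free_cons seq1_free nzT // andbT span_seq1.
apply: contra neq_uv => /vlineP[k def_u].
have k_nz : k != 0 by apply: contraNneq (nzT u uS); rewrite def_u => ->; rewrite scale0r.
by rewrite -(normal_id u uS) def_u proj_normalZ // normal_id.
Qed.

Lemma lker_id_sub_projv (F : fieldType) (vT : vectType F) (U : {vspace vT}) :
  lker (\1 - projv U)%VF = U.
Proof.
apply/vspaceP => x; rewrite memv_ker add_lfunE opp_lfunE id_lfunE subr_eq0.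
by apply/eqP/idP => [->|/projv_id ->]; rewrite ?memv_proj.
Qed.

Definition coset (F : finFieldType) nu (C : {vspace 'rV[F]_nu}) (y : 'rV[F]_nu) :=
  [set y + c | c in C].

Section SyndromeFamily.
Variables (F : finFieldType) (nu n : nat) (phi : 'Hom('rV[F]_nu, 'rV[F]_n)).

Definition syndrome_family : {set 'rV[F]_n} :=
  [set proj_normal u | u in [set phi (delta_mx 0 j) | j : 'I_nu] :\ 0].
Local Notation Fam := syndrome_family.

Lemma syndrome_family_proj : proj_family Fam.
Proof. by apply: proj_family_normal; rewrite !inE eqxx. Qed.

Lemma syndrome_family_wt1 u : u \in Fam -> exists x, (hamming_wt x <= 1)%N /\ u = phi x.
Proof.
case/imsetP=> w /setD1P[w_nz /imsetP[j _ def_w]] ->.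
rewrite {}def_w in w_nz *.
have [s _ ->] := proj_normal_scale w_nz.
exists (s *: delta_mx 0 j); split; last by rewrite linearZ.
by rewrite (leq_trans (hamming_wtZ _ _)) ?hamming_wt_delta.
Qed.

Lemma syndrome_family_lift (J : {set 'rV[F]_n}) v :
  J \subset Fam -> v \in <<enum J>>%VS ->
  exists2 z, phi z = v & (hamming_wt z <= #|J|)%N.
Proof.
rewrite cardE => /subsetP JF; have : {subset enum J <= Fam}.
  by move=> u; rewrite mem_enum; apply: JF.
elim: (enum J) v => [|u X IH] v XF.
  by rewrite span_nil memv0 => /eqP->; exists 0; rewrite ?linear0 ?hamming_wt0.
have /(IH _) IHX : {subset X <= Fam} by move=> y Xy; apply: XF; rewrite inE Xy orbT.
rewrite span_cons => /memv_addP[a /vlineP[k ->] [w /IHX[z <- wt_z] ->]].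
have [x [wt_x ->]] := syndrome_family_wt1 (XF u (mem_head u X)).
exists (k *: x + z); first by rewrite linearD linearZ.
exact: leq_trans (hamming_wtD _ _) (leq_add (leq_trans (hamming_wtZ _ _) wt_x) wt_z).
Qed.

Lemma syndrome_mem_span z :
  exists I : {set 'rV[F]_n},
    [/\ I \subset Fam, phi z \in <<enum I>>%VS & (#|I| <= hamming_wt z)%N].
Proof.
pose supp := [set j | z 0 j != 0].
exists [set proj_normal u | u in [set phi (delta_mx 0 j) | j in supp] :\ 0]; split.
- by apply/imsetS/setSD/imsetS/subsetP.
- rewrite {1}(row_sum_delta z) linear_sum; apply: memv_suml => j _ /=.
  have [zj0|zj_nz] := eqVneq (z 0 j) 0; first by rewrite zj0 scale0r linear0 mem0v.
  have [phij0|phij_nz] := eqVneq (phi (delta_mx 0 j)) 0.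
    by rewrite linearZ /= phij0 scaler0 mem0v.
  have [s s_nz def_normal] := proj_normal_scale phij_nz.
  rewrite linearZ /=; apply: memvZ.
  have -> : phi (delta_mx 0 j) = s^-1 *: proj_normal (phi (delta_mx 0 j)).
    by rewrite def_normal scalerA mulVf ?scale1r.
  apply/memvZ/memv_span; rewrite mem_enum; apply: imset_f.
  by rewrite !inE phij_nz /=; apply/imsetP; exists j; rewrite ?inE.
- apply: leq_trans (leq_imset_card _ _) _.
  exact: leq_trans (subset_leq_card (subsetDl _ _)) (leq_imset_card _ _).
Qed.

Lemma proj_wt_Some_image v i : proj_wt Fam v = Some i -> exists x, v = phi x.
Proof.
rewrite /proj_wt; case: ifP => // /existsP[J /andP[JF vJ]] _.
by have [z <- _] := syndrome_family_lift JF vJ; exists z.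
Qed.

Variable C : {vspace 'rV[F]_nu}.
Hypothesis lker_phi : lker phi = C.

Lemma mem_coset x w : (w \in coset C x) = (phi w == phi x).
Proof.
apply/imsetP/eqP => [[c cC ->]|phi_wx].
  by move: cC; rewrite -lker_phi memv_ker linearD /= => /eqP->; rewrite addr0.
exists (w - x); last by rewrite addrC subrK.
by rewrite -lker_phi memv_ker linearB /= phi_wx subrr.
Qed.

Lemma coset_leader_wt_le_card x (J : {set 'rV[F]_n}) :
  J \subset Fam -> phi x \in <<enum J>>%VS -> (coset_leader_wt (coset C x) <= #|J|)%N.
Proof.
move=> JF xJ; have [z phi_zx wt_z] := syndrome_family_lift JF xJ.
by apply: leq_trans wt_z; apply: bigminn_le_cond; rewrite mem_coset phi_zx.
Qed.

Lemma proj_wt_syndrome x :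
  proj_wt Fam (phi x) = Some (coset_leader_wt (coset C x)).
Proof.
have [I [IF xI wt_I]] := syndrome_mem_span x.
rewrite /proj_wt; case: ifP => [_|/existsP[]]; last by exists I; rewrite IF xI.
congr Some; apply/eqP; rewrite eqn_leq; apply/andP; split.
  apply: le_bigminn => [|w].
    apply: leq_trans (hamming_wt_max x); apply: leq_trans wt_I.
    by apply: bigminn_le_cond; rewrite IF xI.
  rewrite mem_coset => /eqP phi_wx; have [I' [I'F wI' wt_I']] := syndrome_mem_span w.
  by apply: leq_trans wt_I'; apply: bigminn_le_cond; rewrite I'F -phi_wx wI'.
apply: le_bigminn => [|J /andP[JF xJ]]; last exact: coset_leader_wt_le_card.
exact: leq_trans (coset_leader_wt_le_card IF xI) (subset_leq_card IF).
Qed.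

Lemma alpha_syndrome i : alpha C i = #|[set v | proj_wt Fam v == Some i]|.
Proof.
pose fiber v := [set x | phi x == v].
have coset_fiber x : coset C x = fiber (phi x) by apply/setP => w; rewrite inE mem_coset.
rewrite /alpha; have -> : [set K in cosets C | coset_leader_wt K == i] =
          fiber @: [set v | proj_wt Fam v == Some i].
  apply/setP => K; rewrite inE; apply/andP/imsetP => [[/imsetP[y _ ->] /eqP wt_y]|[v]].
    by exists (phi y); rewrite -/(coset C y) ?inE ?proj_wt_syndrome ?wt_y.
  rewrite inE => /eqP wt_v ->; have [x def_v] := proj_wt_Some_image wt_v.
  move: wt_v; rewrite def_v -coset_fiber proj_wt_syndrome => -[<-].
  by split; first by apply/imsetP; exists x.
rewrite card_in_imset // => v1 v2; rewrite inE => /eqP/proj_wt_Some_image[x ->] _.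
rewrite -coset_fiber => fib; have : x \in coset C x by rewrite mem_coset.
by rewrite fib inE => /eqP.
Qed.

End SyndromeFamily.

Theorem proposition6p3 (F : finFieldType) (nu : nat) (C : {vspace 'rV[F]_nu}) :
  exists (n : nat) (Fam : {set 'rV[F]_n}),
    proj_family Fam /\
    forall i : nat, (i <= nu)%N ->
      alpha C i = #|[set v : 'rV[F]_n | proj_wt Fam v == Some i]|.
Proof.
exists nu, (syndrome_family (\1 - projv C)%VF); split; first exact: syndrome_family_proj.
by move=> i _; apply: alpha_syndrome; apply: lker_id_sub_projv.
Qed.
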